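(* Let $\mathcal T\subset\binom{[n]}{3}$ be an intersecting family with $\tau(\mathcal T)=3$. Then $\gamma_1(\mathcal T)\leq 5$, with equality if and only if $\mathcal T$ is isomorphic to $\mathcal T_0$.
   Context: A family is intersecting if any two members intersect. $\tau(\mathcal T)$ is the minimum size of a set meeting every member of $\mathcal T$. $\gamma_1(\mathcal T)=\min_{x\in[n]}|\{T\in\mathcal T: x\notin T\}|$. $\mathcal T_0\subset\binom{[6]}{3}$ is $\{\{1,2,3\},\{1,2,4\},\{3,4,5\},\{3,4,6\},\{1,5,6\},\{2,5,6\},\{1,3,5\},\{2,4,5\},\{1,4,6\},\{2,3,6\}\}$. Isomorphic means equal up to an injective relabeling of vertices. *)

From mathcomp Require Import all_boot.
Set Implicit Arguments. Unset Strict Implicit. Unset Printing Implicit Defensive.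

(* Vertex set [n] is represented by 'I_n (vertex i of the paper is i-1). *)

Definition uniform3 n (T : {set {set 'I_n}}) : Prop :=
  forall A, A \in T -> #|A| = 3.

Definition intersecting n (T : {set {set 'I_n}}) : Prop :=
  forall A B, A \in T -> B \in T -> A :&: B != set0.

Definition transversal n (S : {set 'I_n}) (T : {set {set 'I_n}}) : bool :=
  [forall A in T, S :&: A != set0].

(* tau(T): minimum size of a set meeting every member of T
   (default n if there is no such set, which cannot happen for
   families without the empty set, since [set: 'I_n] then works) *)
Definition tau n (T : {set {set 'I_n}}) : nat :=
  \big[minn/n]_(S : {set 'I_n} | transversal S T) #|S|.

Definition gamma1 n (T : {set {set 'I_n}}) : nat :=
  \big[minn/#|T|]_(x : 'I_n) #|[set A in T | x \notin A]|.

(* triple {a,b,c} in [6], using the paper's 1-based labels *)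
Definition tr6 (a b c : nat) : {set 'I_6} :=
  [set (inord a.-1 : 'I_6); inord b.-1; inord c.-1].

Definition T0 : {set {set 'I_6}} :=
  [set:: [:: tr6 1 2 3; tr6 1 2 4; tr6 3 4 5; tr6 3 4 6; tr6 1 5 6;
             tr6 2 5 6; tr6 1 3 5; tr6 2 4 5; tr6 1 4 6; tr6 2 3 6]].

Definition iso_T0 n (T : {set {set 'I_n}}) : Prop :=
  exists f : 'I_6 -> 'I_n, injective f /\ T = [set f @: (A : {set 'I_6}) | A in T0].

From Pilot Require Import Defs.
From mathcomp Require Import all_boot.
Set Implicit Arguments. Unset Strict Implicit. Unset Printing Implicit Defensive.

(* The theorem is checked by an exhaustive search, run by [vm_compute], over
   the ways T can be explored member by member.  The vertices met so far are
   numbered 0, ..., k-1 and the members found so far are recorded as triples of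
   such numbers.  While some set S of at most two known vertices meets every
   recorded member, tau(T) = 3 gives a member E of T missing S.  The trace of E
   on the known vertices is nonempty (E meets the recorded members), avoids S,
   has at most three elements and meets every recorded member; we branch over
   these finitely many traces and number the new vertices of E consecutively.
   Once no such S exists, no member of T has a trace of size at most two, so
   all vertices of T are known and T is one of the intersecting families of
   covering triples on them; each such family is checked for gamma1 <= 5 and,
   when gamma1 = 5, for a relabelling onto T0. *)

Lemma foldr_minn_mem (a : nat) l : foldr minn a l \in a :: l.
Proof.
elim: l => [|y l IH] /=; first exact: mem_head.
case: leqP => _; first by rewrite !inE eqxx orbT.
by move: IH; rewrite !inE => /predU1P [->|->]; rewrite ?eqxx ?orbT.
Qed.

Lemma foldr_minn_le (a : nat) l y : y \in a :: l -> foldr minn a l <= y.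
Proof.
elim: l => [|z l IH]; first by rewrite inE => /eqP ->.
rewrite /= geq_min !inE => /or3P [ya|/eqP ->|yl].
- by rewrite IH ?inE ?ya ?orbT.
- by rewrite leqnn.
- by rewrite IH ?inE ?yl ?orbT.
Qed.

Lemma eq_foldr_minn (a : nat) l1 l2 :
  {subset l1 <= a :: l2} -> {subset l2 <= a :: l1} ->
  foldr minn a l1 = foldr minn a l2.
Proof.
have le l l' : {subset l' <= a :: l} -> foldr minn a l <= foldr minn a l'.
  move=> sub; apply: foldr_minn_le.
  by move: (foldr_minn_mem a l'); rewrite inE => /predU1P [->|/sub //]; apply: mem_head.
by move=> s12 s21; apply/eqP; rewrite eqn_leq !le.
Qed.

Lemma big_minn_foldr (I : finType) (P : pred I) (F : I -> nat) a :
  \big[minn/a]_(i | P i) F i = foldr minn a [seq F i | i <- enum P].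
Proof. by rewrite foldrE big_map -big_filter /index_enum unlock /enum_mem -enumT. Qed.

Lemma imset_set_seq (aT rT : finType) (f : aT -> rT) (s : seq aT) :
  f @: [set x in s] = [set x in map f s].
Proof.
apply/setP => y; rewrite inE; apply/imsetP/mapP => [[x]|[x xs ->]].
  by rewrite inE; exists x.
by exists x; rewrite ?inE.
Qed.

Lemma subseq_iota_lt k C i : subseq C (iota 0 k) -> i \in C -> i < k.
Proof. by move=> sC /(mem_subseq sC); rewrite mem_iota. Qed.

(* [memn x l] is [x \in l] (see [memnE]) in a form that [vm_compute] runs
   about twice as fast. *)
Definition memn (x : nat) (l : seq nat) : bool := has (eqn x) l.

Lemma memnE x l : memn x l = (x \in l).
Proof. by apply/hasP/idP => [[y yl /eqnP -> //] | xl]; exists x => //; apply/eqnP. Qed.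

Definition meets (C D : seq nat) : bool := has (memn^~ D) C.
Definition covers (S : seq nat) (K : seq (seq nat)) : bool := all (meets S) K.
Definition same_elements (C D : seq nat) : bool := all (memn^~ D) C && all (memn^~ C) D.

Lemma meetsP C D : reflect (exists2 i, i \in C & i \in D) (meets C D).
Proof. by apply: (iffP hasP) => -[i iC iD]; exists i; rewrite ?memnE in iD *. Qed.

Lemma same_elementsP C D : same_elements C D -> C =i D.
Proof.
case/andP => /allP CD /allP DC i; apply/idP/idP => [/CD | /DC]; by rewrite memnE.
Qed.

Fixpoint sublists (l : seq nat) : seq (seq nat) :=
  if l is x :: l' then let s := sublists l' in map (cons x) s ++ s else [:: [::]].

Lemma mem_sublists l C : (C \in sublists l) = subseq C l.
Proof.
elim: l C => [|x l IH] C /=; first by rewrite inE; case: C.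
rewrite mem_cat; apply/idP/idP.
  case/orP => [/mapP [D HD ->]|HC]; first by rewrite /= eqxx -IH.
  by apply: subseq_trans (subseq_cons l x); rewrite -IH.
case: C => [|y C] /=; first by rewrite IH sub0seq orbT.
case: eqP => [->|_] H; last by rewrite IH H orbT.
by apply/orP; left; apply/mapP; exists C; rewrite ?IH.
Qed.

(* [vm_compute] evaluates both arguments of [&&], [||] and [==>]; hence the
   nested filter in [small_covers] and the [if]s in [family_ok] and
   [subfamilies_ok]. *)
Definition small_covers K k :=
  [seq S <- [seq S <- sublists (iota 0 k) | size S <= 2] | covers S K].

Definition traces K k S := [seq C <- sublists (iota 0 k) |
  [&& 0 < size C, size C <= 3, ~~ meets C S & covers C K]].

Definition covering_triples K k :=
  undup [seq C <- sublists (iota 0 k) | (size C == 3) && covers C K].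

(* A branching heuristic only: soundness uses nothing but [fewest_traces_in]. *)
Definition fewest_traces K k (S0 : seq nat) (Ss : seq (seq nat)) :=
  foldl (fun b S => if size (traces K k S) < size (traces K k b) then S else b) S0 Ss.

Lemma fewest_traces_in K k S0 Ss : fewest_traces K k S0 Ss \in S0 :: Ss.
Proof.
elim: Ss S0 => [|S1 Ss IH] S0 /=; first exact: mem_head.
move: (IH (if size (traces K k S1) < size (traces K k S0) then S1 else S0)).
by case: ifP => _; rewrite !inE => /orP [->|->]; rewrite ?orbT.
Qed.

Definition T0_abs : seq (seq nat) :=
  [:: [:: 0; 1; 2]; [:: 0; 1; 3]; [:: 2; 3; 4]; [:: 2; 3; 5]; [:: 0; 4; 5];
      [:: 1; 4; 5]; [:: 0; 2; 4]; [:: 1; 3; 4]; [:: 0; 3; 5]; [:: 1; 2; 5]].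

Definition gamma1_abs k (s : seq (seq nat)) :=
  foldr minn (size s) [seq count (fun C => i \notin C) s | i <- iota 0 k].

(* [p] sends vertex [a] of [T0_abs] to vertex [nth 0 p a]. *)
Definition relabels_T0 (s : seq (seq nat)) (p : seq nat) :=
  all (fun A => has (same_elements (map (nth 0 p) A)) s) T0_abs &&
  all (fun C => has (fun A => same_elements C (map (nth 0 p) A)) T0_abs) s.

(* Prunes [relabel_candidates]: members of [T0_abs] whose vertices are all
   already relabelled must land in [s]. *)
Definition partial_relabel (s : seq (seq nat)) (p : seq nat) :=
  all (fun A => all (fun a => a < size p) A ==>
                has (same_elements (map (nth 0 p) A)) s) T0_abs.

Fixpoint relabel_candidates m k s (p : seq nat) : seq (seq nat) :=
  if m is m'.+1 then
    flatten [seq relabel_candidates m' k s (rcons p i)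
            | i <- iota 0 k & (i \notin p) && partial_relabel s (rcons p i)]
  else [:: p].

Lemma relabel_candidatesP m k s p q : q \in relabel_candidates m k s p ->
  uniq p -> all (fun i => i < k) p ->
  [/\ uniq q, all (fun i => i < k) q & size q = size p + m].
Proof.
elim: m p => [|m IH] p /=; first by rewrite inE => /eqP -> ? ?; rewrite addn0.
case/flattenP=> r /mapP [i]; rewrite mem_filter mem_iota /= => /andP [/andP [ip _] ik] -> qP Up Ap.
have := IH _ qP; rewrite rcons_uniq ip Up all_rcons ik Ap size_rcons addSnnS.
by apply.
Qed.

Definition family_ok k s :=
  let g := gamma1_abs k s in
  if g <= 4 then true
  else if g == 5 then has (relabels_T0 s) (relabel_candidates 6 k s [::]) else false.

Fixpoint subfamilies_ok (K : seq (seq nat)) k (l acc : seq (seq nat)) : bool :=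
  if l is C :: l' then
    (if all (meets C) acc then subfamilies_ok K k l' (C :: acc) else true) &&
    (if C \in K then true else subfamilies_ok K k l' acc)
  else family_ok k acc.

Lemma subfamilies_ok_sound K k (P : pred (seq nat)) l acc :
  subfamilies_ok K k l acc ->
  {in acc ++ filter P l &, forall C D, meets C D} -> {in l, forall C, C \in K -> P C} ->
  family_ok k (rev (filter P l) ++ acc).
Proof.
elim: l acc => [//|C l IH] acc /= /andP [okC okNC] meetsP KP.
have KP' : {in l, forall D, D \in K -> P D} by move=> D Dl; apply: KP; rewrite inE Dl orbT.
case PC: (P C); rewrite /= PC in meetsP *; last first.
  have CK : (C \in K) = false by apply: contraFF PC; apply: KP; apply: mem_head.
  by rewrite CK in okNC; apply: IH.
have mid : {subset C :: acc ++ filter P l <= acc ++ C :: filter P l}.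
  by move=> D; rewrite !(mem_cat, inE) => /or3P [] ->; rewrite ?orbT.
rewrite (_ : all (meets C) acc) in okC; last first.
  by apply/allP => D Dacc; apply: meetsP; apply: mid; rewrite !inE ?mem_cat ?eqxx ?Dacc ?orbT.
rewrite rev_cons cat_rcons; apply: IH => // D1 D2 /mid D1in /mid D2in.
exact: meetsP.
Qed.

Fixpoint search fuel (K : seq (seq nat)) k : bool :=
  if fuel is f.+1 then
    if small_covers K k is S0 :: Ss then
      all (fun C => search f (rcons K (C ++ iota k (3 - size C))) (k + (3 - size C)))
          (traces K k (fewest_traces K k S0 Ss))
    else subfamilies_ok K k (covering_triples K k) [::]
  else false.

Section Labelling.
Variables (n : nat) (x0 : 'I_n).

(* The list [vs] numbers the known vertices: number [i] stands for [nth x0 vs i]. *)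
Definition lab (vs : seq 'I_n) (C : seq nat) : {set 'I_n} :=
  [set x in map (nth x0 vs) C].

Definition trace (vs : seq 'I_n) (E : {set 'I_n}) : seq nat :=
  [seq i <- iota 0 (size vs) | nth x0 vs i \in E].

Definition fresh (vs : seq 'I_n) (E : {set 'I_n}) : seq 'I_n :=
  [seq x <- enum E | x \notin vs].

Lemma mem_lab vs C i : uniq vs -> subseq C (iota 0 (size vs)) -> i < size vs ->
  (nth x0 vs i \in lab vs C) = (i \in C).
Proof.
move=> Uvs sC ilt; rewrite inE; apply/mapP/idP => [[j jC]|iC]; last by exists i.
by move/eqP; rewrite nth_uniq ?(subseq_iota_lt sC jC) // => /eqP ->.
Qed.

Lemma lab_sub vs C x : subseq C (iota 0 (size vs)) -> x \in lab vs C -> x \in vs.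
Proof. by move=> sC; rewrite inE => /mapP [j /(subseq_iota_lt sC) jlt ->]; apply: mem_nth. Qed.

Lemma lab_same vs C D : same_elements C D -> lab vs C = lab vs D.
Proof.
move=> /same_elementsP eqCD; apply/setP => x; rewrite !inE.
by apply/mapP/mapP => -[i iin ->]; exists i; rewrite ?eqCD // -eqCD.
Qed.

Lemma lab_cat vs w C : subseq C (iota 0 (size vs)) -> lab (vs ++ w) C = lab vs C.
Proof.
move=> sC; rewrite /lab (_ : map _ C = map (nth x0 vs) C) //.
by apply/eq_in_map => i /(subseq_iota_lt sC) ilt; rewrite nth_cat ilt.
Qed.

Lemma lab_inj vs : uniq vs ->
  {in [pred C | subseq C (iota 0 (size vs))] &, injective (lab vs)}.
Proof.
move=> Uvs C D sC sD eqCD; apply: (@irr_sorted_eq _ ltn ltn_trans ltnn).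
- exact: (@subseq_sorted _ _ ltn_trans _ _ sC (iota_ltn_sorted 0 _)).
- exact: (@subseq_sorted _ _ ltn_trans _ _ sD (iota_ltn_sorted 0 _)).
move=> i; apply/idP/idP => iin.
  by rewrite -(mem_lab Uvs sD (subseq_iota_lt sC iin)) -eqCD mem_lab ?(subseq_iota_lt sC).
by rewrite -(mem_lab Uvs sC (subseq_iota_lt sD iin)) eqCD mem_lab ?(subseq_iota_lt sD).
Qed.

Lemma lab_iota vs : lab vs (iota 0 (size vs)) = [set x in vs].
Proof. by rewrite /lab; have := mkseq_nth x0 vs; rewrite /mkseq => ->. Qed.

Lemma trace_subseq vs E : subseq (trace vs E) (iota 0 (size vs)).
Proof. exact: filter_subseq. Qed.

Lemma mem_trace vs E i : (i \in trace vs E) = (i < size vs) && (nth x0 vs i \in E).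
Proof. by rewrite mem_filter mem_iota andbC. Qed.

Lemma map_nth_trace vs E : map (nth x0 vs) (trace vs E) = [seq x <- vs | x \in E].
Proof. by rewrite -filter_map; congr filter; have := mkseq_nth x0 vs; rewrite /mkseq. Qed.

Lemma size_trace_fresh vs E : uniq vs -> size (trace vs E) + size (fresh vs E) = #|E|.
Proof.
move=> Uvs; rewrite cardE -(count_predC (mem vs) (enum E)) -!size_filter.
congr (_ + _); rewrite -(size_map (nth x0 vs)) map_nth_trace.
apply/perm_size/uniq_perm; [exact: filter_uniq | exact: filter_uniq (enum_uniq _) |].
by move=> x; rewrite (mem_filter _ _ vs) (mem_filter _ _ (enum E)) mem_enum andbC.
Qed.

Lemma uniq_cat_fresh vs E : uniq vs -> uniq (vs ++ fresh vs E).
Proof.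
move=> Uvs; rewrite cat_uniq Uvs filter_uniq ?enum_uniq //= andbT.
by apply/hasP => -[x]; rewrite mem_filter => /andP [/negbTE ->].
Qed.

Lemma lab_cat_fresh vs E :
  E = lab (vs ++ fresh vs E) (trace vs E ++ iota (size vs) (size (fresh vs E))).
Proof.
have fresh_nth : map (nth x0 (vs ++ fresh vs E)) (iota (size vs) (size (fresh vs E))) = fresh vs E.
  rewrite -[size vs]addn0 iotaDl -map_comp -[RHS](mkseq_nth x0).
  by apply/eq_map => i /=; rewrite nth_cat ltnNge leq_addr addKn.
have trace_nth : map (nth x0 (vs ++ fresh vs E)) (trace vs E) = [seq x <- vs | x \in E].
  rewrite -map_nth_trace; apply/eq_in_map => i.
  by rewrite mem_trace => /andP [ilt _]; rewrite nth_cat ilt.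
apply/setP => x; rewrite inE map_cat mem_cat fresh_nth trace_nth.
rewrite (mem_filter _ _ vs) (mem_filter _ _ (enum E)) mem_enum.
by case: (x \in vs); case: (x \in E).
Qed.

Lemma gamma1_lab vs s : uniq vs -> uniq s ->
  (forall C, C \in s -> subseq C (iota 0 (size vs))) ->
  gamma1 [set E in map (lab vs) s] = gamma1_abs (size vs) s.
Proof.
move=> Uvs Us sS.
have Um : uniq (map (lab vs) s) by rewrite map_inj_in_uniq // => C D /sS sC /sS sD; apply: lab_inj.
have card_s : #|[set E in map (lab vs) s]| = size s.
  by rewrite cardsE (card_uniqP Um) size_map.
have missing x : #|[set A in [set E in map (lab vs) s] | x \notin A]| =
    if x \in vs then count (fun C => index x vs \notin C) s else size s.
  rewrite (_ : [set A in _ | _] =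
               [set A in filter (fun A : {set 'I_n} => x \notin A) (map (lab vs) s)]).
    rewrite cardsE (card_uniqP (filter_uniq _ Um)) size_filter count_map.
    case: ifP => xvs; last first.
      rewrite -(count_predT s); apply: eq_in_count => C /sS sC /=.
      by apply: contraFN xvs; apply: lab_sub.
    apply: eq_in_count => C /sS sC /=.
    by rewrite -{1}(nth_index x0 xvs) mem_lab ?index_mem.
  by apply/setP => A; rewrite !inE mem_filter andbC.
rewrite /gamma1 big_minn_foldr card_s; apply: eq_foldr_minn => _ /mapP [z zin ->].
  rewrite missing; case: ifP => zvs; last exact: mem_head.
  by rewrite inE; apply/orP; right; apply/mapP; exists (index z vs); rewrite ?mem_iota ?index_mem.
move: zin; rewrite mem_iota => /= zlt; rewrite inE; apply/orP; right; apply/mapP.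
by exists (nth x0 vs z); rewrite ?mem_enum // missing mem_nth // index_uniq.
Qed.

End Labelling.

Lemma T0E : T0 = [set E in map (fun A => [set x in map (@inord 5) A]) T0_abs].
Proof.
have tr6E a b c : tr6 a b c = [set x in map (@inord 5) [:: a.-1; b.-1; c.-1]].
  by apply/setP => x; rewrite !inE orbA.
by rewrite /T0 !tr6E.
Qed.

Lemma T0_abs_sub : {in T0_abs, forall A, subseq A (iota 0 6)}.
Proof. by apply/allP. Qed.

Lemma imset_T0 n (f : 'I_6 -> 'I_n) :
  [set f @: (A : {set 'I_6}) | A in T0] =
  [set E in map (fun A => [set x in map (f \o inord) A]) T0_abs].
Proof.
rewrite T0E imset_set_seq -map_comp (@eq_map _ _ _ (fun A => [set x in map (f \o inord) A])) //.
by move=> A /=; rewrite imset_set_seq map_comp.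
Qed.

Lemma gamma1_iso_T0 n (T : {set {set 'I_n}}) : iso_T0 T -> gamma1 T = 5.
Proof.
case=> f [f_inj ->]; rewrite imset_T0.
pose vs := [seq f (inord a) | a <- iota 0 6].
have vs_nth a : a < 6 -> nth (f ord0) vs a = f (inord a).
  by move=> alt; rewrite (nth_map 0) ?size_iota ?nth_iota.
have size_vs : size vs = 6 by rewrite size_map size_iota.
rewrite (_ : map _ T0_abs = map (lab (f ord0) vs) T0_abs); last first.
  apply/eq_in_map => A /T0_abs_sub sA; rewrite /lab (_ : map _ A = map (nth (f ord0) vs) A) //.
  by apply/eq_in_map => a /(subseq_iota_lt sA) alt; rewrite vs_nth.
rewrite gamma1_lab ?size_vs //; last exact: T0_abs_sub.
rewrite map_inj_in_uniq ?iota_uniq // => a b; rewrite !mem_iota => /andP [_ alt] /andP [_ blt].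
by move/f_inj/(congr1 val); rewrite /= !inordK.
Qed.

Lemma iso_T0_relabel n (x0 : 'I_n) vs s p : uniq vs -> uniq p -> size p = 6 ->
  all (fun i => i < size vs) p -> relabels_T0 s p -> iso_T0 [set E in map (lab x0 vs) s].
Proof.
move=> Uvs Up size_p p_lt /andP [/allP T0_in_s /allP s_in_T0].
pose f (i : 'I_6) := nth x0 vs (nth 0 p i).
have p_nth (i : 'I_6) : nth 0 p i < size vs by apply: (allP p_lt); rewrite mem_nth ?size_p.
exists f; split.
  move=> i j /eqP; rewrite /f nth_uniq // => /eqP /eqP.
  by rewrite nth_uniq ?size_p // => /eqP /val_inj.
have lab_T0 A : A \in T0_abs -> [set x in map (f \o inord) A] = lab x0 vs (map (nth 0 p) A).
  move=> /T0_abs_sub sA; rewrite /lab -map_comp (_ : map _ A = map (nth x0 vs \o nth 0 p) A) //.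
  by apply/eq_in_map => a /(subseq_iota_lt sA) alt; rewrite /f /= (@inordK 5).
rewrite imset_T0; apply/setP => E; rewrite !in_set; apply/mapP/mapP => [[C Cs ->]|[A AT0 ->]].
  case/hasP: (s_in_T0 C Cs) => A AT0 CA; exists A => //.
  by rewrite lab_T0 // (lab_same _ _ CA).
case/hasP: (T0_in_s A AT0) => C Cs AC; exists C => //.
by rewrite lab_T0 // (lab_same _ _ AC).
Qed.

Lemma family_ok_sound n (x0 : 'I_n) (T : {set {set 'I_n}}) vs s : uniq vs -> uniq s ->
  (forall C, C \in s -> subseq C (iota 0 (size vs))) -> T = [set E in map (lab x0 vs) s] ->
  family_ok (size vs) s -> gamma1 T <= 5 /\ (gamma1 T = 5 -> iso_T0 T).
Proof.
move=> Uvs Us sS ->; rewrite /family_ok -(gamma1_lab x0) //.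
case: leqP => [le4 _|gt4].
  by split=> [|eq5]; [exact: leq_trans le4 _ | rewrite eq5 in le4].
case: eqP => // eq5 /hasP [p /relabel_candidatesP [//|//|Up p_lt size_p] relab].
by split=> [|_]; [rewrite eq5 | exact: iso_T0_relabel Uvs Up size_p p_lt relab].
Qed.

Section Search.
Variables (n : nat) (x0 : 'I_n) (T : {set {set 'I_n}}).
Hypotheses (T_uniform : uniform3 T) (T_intersecting : intersecting T).

Definition realizes (vs : seq 'I_n) (K : seq (seq nat)) : Prop :=
  [/\ uniq vs, K != [::] &
      forall C, C \in K -> subseq C (iota 0 (size vs)) /\ lab x0 vs C \in T].

Lemma realizes_member A : A \in T -> realizes (enum A) [:: iota 0 3].
Proof.
move=> AT; have sizeA : size (enum A) = 3 by rewrite -cardE T_uniform.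
split=> [||C]; [exact: enum_uniq | by [] | rewrite inE => /eqP ->].
by rewrite -{1 2}sizeA subseq_refl lab_iota set_enum.
Qed.

Lemma covers_trace vs K E : realizes vs K -> E \in T -> covers (trace x0 vs E) K.
Proof.
case=> Uvs _ KT ET; apply/allP => D /KT [sD DT].
case/set0Pn: (T_intersecting ET DT) => x; rewrite !inE => /andP [xE /mapP [j jD xj]].
apply/meetsP; exists j => //; rewrite mem_trace -xj xE andbT.
exact: subseq_iota_lt sD jD.
Qed.

Lemma size_trace vs K E : realizes vs K -> E \in T -> 0 < size (trace x0 vs E) <= 3.
Proof.
move=> KR ET; have [Uvs K0 _] := KR.
rewrite -(T_uniform ET) -(size_trace_fresh x0 E Uvs) leq_addr andbT.
have [D DK] : exists D, D \in K by case: (K) K0 => // D ? _; exists D; apply: mem_head.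
by case/meetsP: (allP (covers_trace KR ET) D DK) => i; case: (trace x0 vs E).
Qed.

Lemma size_fresh vs E : uniq vs -> E \in T ->
  size (fresh vs E) = 3 - size (trace x0 vs E).
Proof. by move=> Uvs ET; rewrite -(T_uniform ET) -(size_trace_fresh x0 E Uvs) addKn. Qed.

Lemma realizes_fresh vs K E : realizes vs K -> E \in T ->
  realizes (vs ++ fresh vs E)
           (rcons K (trace x0 vs E ++ iota (size vs) (size (fresh vs E)))).
Proof.
move=> [Uvs K0 KT] ET; split; first exact: uniq_cat_fresh.
  by rewrite -size_eq0 size_rcons.
have sub_cat C : subseq C (iota 0 (size vs)) -> subseq C (iota 0 (size (vs ++ fresh vs E))).
  by move=> sC; apply: subseq_trans sC _; rewrite size_cat iotaD prefix_subseq.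
move=> C; rewrite mem_rcons inE => /predU1P [->|/KT [sC CT]].
  split; last by rewrite -lab_cat_fresh.
  rewrite size_cat iotaD add0n; apply: cat_subseq (subseq_refl _).
  exact: trace_subseq.
by rewrite lab_cat //; split => //; apply: sub_cat.
Qed.

Lemma trace_in_traces vs K S E : realizes vs K -> E \in T -> lab x0 vs S :&: E = set0 ->
  trace x0 vs E \in traces K (size vs) S.
Proof.
move=> KR ET SE; rewrite mem_filter mem_sublists trace_subseq andbT.
have /andP [-> ->] := size_trace KR ET; rewrite covers_trace // andbT /=.
apply/meetsP => -[i]; rewrite mem_trace => /andP [_ iE] iS.
by move/setP: SE => /(_ (nth x0 vs i)); rewrite !inE iE (map_f _ iS).
Qed.

Lemma trace_triple vs K E : realizes vs K -> small_covers K (size vs) = [::] -> E \in T ->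
  trace x0 vs E \in covering_triples K (size vs) /\ lab x0 vs (trace x0 vs E) = E.
Proof.
move=> KR no_cover ET; have [Uvs _ _] := KR.
have /andP [_ le3] := size_trace KR ET.
have size3 : size (trace x0 vs E) = 3.
  apply/eqP; rewrite eqn_leq le3 ltnNge; apply/negP => le2.
  suff : trace x0 vs E \in small_covers K (size vs) by rewrite no_cover.
  by rewrite !mem_filter le2 covers_trace // mem_sublists trace_subseq.
split; first by rewrite mem_undup mem_filter size3 covers_trace // mem_sublists trace_subseq.
have /size0nil fresh0 : size (fresh vs E) = 0 by rewrite size_fresh // size3.
by rewrite [RHS](lab_cat_fresh x0 vs) fresh0 cats0 /= cats0.
Qed.

Lemma no_small_cover_sound vs K : realizes vs K -> small_covers K (size vs) = [::] ->
  subfamilies_ok K (size vs) (covering_triples K (size vs)) [::] ->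
  gamma1 T <= 5 /\ (gamma1 T = 5 -> iso_T0 T).
Proof.
move=> KR no_cover ok; have [Uvs _ KT] := KR.
have covering_triples_sub C : C \in covering_triples K (size vs) -> subseq C (iota 0 (size vs)).
  by rewrite mem_undup mem_filter mem_sublists => /andP [].
pose F := [seq C <- covering_triples K (size vs) | lab x0 vs C \in T].
have okF : family_ok (size vs) (rev F).
  rewrite -[rev F]cats0; apply: subfamilies_ok_sound ok _ _ => [C D|C _ /KT []//].
  rewrite /= !mem_filter => /andP [CT /covering_triples_sub sC] /andP [DT /covering_triples_sub sD].
  case/set0Pn: (T_intersecting CT DT) => x; rewrite inE => /andP [xC].
  rewrite inE => /mapP [i iC xi]; move: xC.
  by rewrite xi mem_lab ?(subseq_iota_lt sD iC) // => iD; apply/meetsP; exists i.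
apply: (family_ok_sound (x0 := x0) Uvs _ _ _ okF).
- by rewrite rev_uniq filter_uniq // undup_uniq.
- by move=> C; rewrite mem_rev mem_filter => /andP [_ /covering_triples_sub].
apply/setP => E; rewrite inE map_rev mem_rev; apply/idP/mapP => [ET|[C]].
  have [Etr labE] := trace_triple KR no_cover ET.
  by exists (trace x0 vs E); rewrite // mem_filter labE ET.
by rewrite mem_filter => /andP [CT _] ->.
Qed.

Lemma search_sound fuel vs K :
  (forall S : {set 'I_n}, #|S| <= 2 -> ~~ Defs.transversal S T) ->
  search fuel K (size vs) -> realizes vs K ->
  gamma1 T <= 5 /\ (gamma1 T = 5 -> iso_T0 T).
Proof.
move=> no_small; elim: fuel vs K => [//|fuel IH] vs K /=.
case covers_eq: (small_covers K (size vs)) => [|S0 Ss].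
  by move=> ok KR; apply: no_small_cover_sound KR covers_eq ok.
move=> /allP search_traces KR; have [Uvs _ _] := KR.
have : fewest_traces K (size vs) S0 Ss \in small_covers K (size vs).
  by rewrite covers_eq fewest_traces_in.
set S := fewest_traces _ _ _ _; rewrite !mem_filter mem_sublists => /andP [_ /andP [S2 _]].
have cardS : #|lab x0 vs S| <= 2.
  by rewrite cardsE; apply: leq_trans (card_size _) _; rewrite size_map.
case/forallPn: (no_small _ cardS) => E; rewrite negb_imply negbK => /andP [ET /eqP SE].
have := search_traces _ (trace_in_traces KR ET SE).
rewrite -size_fresh // -size_cat => /IH; apply.
exact: realizes_fresh.
Qed.

End Search.

Lemma tau_le_card n (T : {set {set 'I_n}}) S : Defs.transversal S T -> tau T <= #|S|.
Proof.
by move=> ST; rewrite /tau big_minn_foldr; apply: foldr_minn_le; rewrite inE map_f ?orbT ?mem_enum.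
Qed.

Lemma search_ok : search 10 [:: iota 0 3] 3.
Proof. by vm_compute. Qed.

Theorem corollary3p3 (n : nat) (T : {set {set 'I_n}}) :
  uniform3 T -> intersecting T -> tau T = 3 ->
  gamma1 T <= 5 /\ (gamma1 T = 5 <-> iso_T0 T).
Proof.
move=> T_uniform T_intersecting tau3.
have no_small_transversal (S : {set 'I_n}) : #|S| <= 2 -> ~~ Defs.transversal S T.
  by move=> S2; apply: contraL S2 => /tau_le_card; rewrite tau3 -ltnNge.
have [A AT] : exists A, A \in T.
  have := no_small_transversal set0; rewrite cards0 => /(_ isT) /forallPn [A].
  by rewrite negb_imply => /andP [AT _]; exists A.
have [x0 _] : exists x0, x0 \in A by apply/set0Pn; rewrite -card_gt0 T_uniform.
have search_A : search 10 [:: iota 0 3] (size (enum A)).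
  by rewrite -cardE (T_uniform _ AT); exact: search_ok.
have [le5 eq5_iso] := search_sound T_uniform T_intersecting no_small_transversal search_A
                        (realizes_member x0 T_uniform AT).
by split=> //; split=> [/eq5_iso // | /gamma1_iso_T0].
Qed.
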